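(* Let $\beta,\delta\in(0,1)$, $K>0$, $d_1,d_2>0$, and let $\eta_1,\eta_2\ge0$ be constants. Consider $$\frac{df}{dt}=\tfrac12 fm\beta L-\delta f-\eta_1\frac{f}{f+d_1},\qquad \frac{dm}{dt}=\tfrac12 fm\beta L-\delta m-\eta_2\frac{m}{m+d_2},\qquad L=1-\frac{f+m}{K}.$$ If $\beta K<2\delta+\frac{\eta_1}{K+d_1}+\frac{\eta_2}{K+d_2}$, then the trivial equilibrium $(0,0)$ is globally asymptotically stable.
   Context: $f,m$ are female and male densities, with populations considered in the region $0\le f,m$, $f+m\le K$. The model uses saturating harvesting of both females and males. *)

From Stdlib Require Import Reals.
From Coquelicot Require Import Coquelicot.
Open Scope R_scope.

Definition Lfun (K f m : R) : R := 1 - (f + m) / K.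

Definition rhs_f (beta delta K d1 eta1 : R) (f m : R) : R :=
  / 2 * f * m * beta * Lfun K f m - delta * f - eta1 * (f / (f + d1)).

Definition rhs_m (beta delta K d2 eta2 : R) (f m : R) : R :=
  / 2 * f * m * beta * Lfun K f m - delta * m - eta2 * (m / (m + d2)).

Definition in_region (K f m : R) : Prop := 0 <= f /\ 0 <= m /\ f + m <= K.

Definition is_solution (beta delta K d1 d2 eta1 eta2 : R) (f m : R -> R) : Prop :=
  filterlim f (at_right 0) (locally (f 0)) /\
  filterlim m (at_right 0) (locally (m 0)) /\
  (forall t, 0 < t ->
     is_derive f t (rhs_f beta delta K d1 eta1 (f t) (m t)) /\
     is_derive m t (rhs_m beta delta K d2 eta2 (f t) (m t))).

Definition GAS_origin (beta delta K d1 d2 eta1 eta2 : R) : Prop :=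
  (forall eps, 0 < eps -> exists del, 0 < del /\
     forall f m : R -> R,
       is_solution beta delta K d1 d2 eta1 eta2 f m ->
       in_region K (f 0) (m 0) ->
       sqrt (f 0 ^ 2 + m 0 ^ 2) < del ->
       forall t, 0 <= t -> sqrt (f t ^ 2 + m t ^ 2) < eps) /\
  (forall f m : R -> R,
     is_solution beta delta K d1 d2 eta1 eta2 f m ->
     in_region K (f 0) (m 0) ->
     is_lim f p_infty 0 /\ is_lim m p_infty 0).

(* Each equation has the form x' = x * r(t) with a per-capita rate r that is
   bounded above near any time where x >= 0, so neither population can become
   negative; and the total V = f + m cannot exceed K, since V' <= 0 when V > K.
   On the region the harvesting terms dominate the linear terms
   eta_i x / (K + d_i), and the logistic coupling beta f m L is at most
   (beta K / 4) min(f, m).  Weighting these two bounds with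
   p = delta + eta1/(K + d1) and q = delta + eta2/(K + d2) gives V' <= -c V for
   c = delta (p + q - beta K / 4) / (p + q), which is positive already when
   beta K / 4 < p + q.  Hence V(t) <= V(0) e^{-ct}, which gives both stability
   and attractivity. *)

From Stdlib Require Import Reals Lra.
From Coquelicot Require Import Coquelicot.
Open Scope R_scope.

Definition right_continuous (p : R -> R) (t : R) : Prop :=
  filterlim p (at_right t) (locally (p t)).

Lemma right_continuous_of_continuous (p : R -> R) (t : R) :
  continuous p t -> right_continuous p t.
Proof.
  intros Hp P HP. destruct (Hp P HP) as [e He]. exists e. intros u Hu _. exact (He u Hu).
Qed.

Lemma right_continuous_of_is_derive (p : R -> R) (t l : R) :
  is_derive p t l -> right_continuous p t.
Proof.
  intros Hd. apply right_continuous_of_continuous.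
  apply (@ex_derive_continuous R_AbsRing R_NormedModule). exists l. exact Hd.
Qed.

Lemma right_continuous_plus (p q : R -> R) (t : R) :
  right_continuous p t -> right_continuous q t -> right_continuous (fun u => p u + q u) t.
Proof.
  intros Hp Hq.
  exact (filterlim_comp_2 p q Rplus Hp Hq (@filterlim_plus R_AbsRing R_NormedModule _ _)).
Qed.

Lemma right_continuous_mult (p q : R -> R) (t : R) :
  right_continuous p t -> right_continuous q t -> right_continuous (fun u => p u * q u) t.
Proof. intros Hp Hq. exact (filterlim_comp_2 p q Rmult Hp Hq (@filterlim_mult R_AbsRing _ _)). Qed.

Lemma right_continuous_near (p : R -> R) (t eps : R) :
  right_continuous p t -> 0 < eps -> at_right t (fun u => Rabs (p u - p t) < eps).
Proof. intros Hp He. exact (proj1 (filterlim_locally p (p t)) Hp (mkposreal eps He)). Qed.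

Lemma derive_nonpos_le (p dp : R -> R) (a b : R) :
  a <= b -> (forall t, a <= t <= b -> is_derive p t (dp t)) ->
  (forall t, a <= t <= b -> dp t <= 0) -> p b <= p a.
Proof.
  intros Hab Hd Hneg.
  destruct (MVT_gen p a b dp) as [c [Hc Heq]];
    rewrite ?Rmin_left, ?Rmax_right in * by lra.
  - intros t Ht. apply Hd. lra.
  - intros t Ht. apply continuity_pt_filterlim, (@ex_derive_continuous R_AbsRing R_NormedModule).
    exists (dp t). apply Hd. exact Ht.
  - assert (dp c <= 0) by (apply Hneg; exact Hc). nra.
Qed.

Lemma right_continuous_derive_nonpos_le (p dp : R -> R) (a b : R) :
  a < b -> right_continuous p a -> (forall t, a < t <= b -> is_derive p t (dp t)) ->
  (forall t, a < t <= b -> dp t <= 0) -> p b <= p a.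
Proof.
  intros Hab Hra Hd Hneg. apply Rnot_lt_le. intros Hlt.
  assert (Hbelow : forall s, a < s <= b -> p b <= p s).
  { intros s Hs. apply (derive_nonpos_le p dp); intros; try apply Hd; try apply Hneg; lra. }
  assert (Hnear : at_right a (fun s => (a < s < b) /\ Rabs (p s - p a) < p b - p a)).
  { apply filter_and.
    - exists (mkposreal _ (proj2 (Rlt_0_minus _ _) Hab)). intros s Hs Has.
      change (Rabs (s - a) < b - a) in Hs. apply Rabs_def2 in Hs. lra.
    - apply right_continuous_near; [exact Hra | lra]. }
  destruct (@Hierarchy.filter_ex _ _ (at_right_proper_filter a) _ Hnear) as [s [Hs Hps]].
  apply Rabs_def2 in Hps. pose proof (Hbelow s ltac:(lra)). lra.
Qed.

Lemma last_time_below (p : R -> R) (C t1 : R) :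
  (forall t, 0 < t -> continuous p t) -> p 0 <= C -> 0 <= t1 -> C < p t1 ->
  exists t0, 0 <= t0 < t1 /\ p t0 <= C /\ forall t, t0 < t <= t1 -> C < p t.
Proof.
  intros Hc H0 Ht1 Hp1.
  set (E := fun t => 0 <= t <= t1 /\ p t <= C).
  destruct (completeness E) as [t0 [Hub Hlub]].
  { exists t1. intros t [Ht _]. lra. }
  { exists 0. split; [lra | exact H0]. }
  assert (Ht0 : 0 <= t0 <= t1).
  { split; [apply Hub; split; [lra | exact H0] | apply Hlub; intros t [Ht _]; lra]. }
  assert (Hafter : forall t, t0 < t <= t1 -> C < p t).
  { intros t Ht. apply Rnot_le_lt. intros Hle.
    assert (t <= t0) by (apply Hub; split; [lra | exact Hle]). lra. }
  assert (Hpt0 : p t0 <= C).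
  { apply Rnot_lt_le. intros Hlt.
    destruct (Req_dec t0 0) as [-> | Hne]; [lra |].
    destruct (proj1 (filterlim_locally (F := locally t0) p (p t0)) (Hc t0 ltac:(lra))
                (mkposreal _ (proj2 (Rlt_0_minus _ _) Hlt))) as [d Hd].
    assert (Hbound : is_upper_bound E (t0 - d)).
    { intros t [Ht Hpt]. apply Rnot_lt_le. intros Hgt.
      assert (t <= t0) by (apply Hub; split; assumption).
      assert (Hball : Rabs (p t - p t0) < p t0 - C).
      { apply (Hd t). change (Rabs (t - t0) < d). rewrite Rabs_left1; lra. }
      apply Rabs_def2 in Hball. lra. }
    pose proof (Hlub _ Hbound). pose proof (cond_pos d). lra. }
  exists t0. repeat split; try lra; try assumption.
  destruct (Req_dec t0 t1) as [-> | ]; lra.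
Qed.

Lemma barrier_le (p dp : R -> R) (C : R) :
  (forall t, 0 < t -> is_derive p t (dp t)) -> right_continuous p 0 -> p 0 <= C ->
  (forall t, 0 < t -> C < p t -> dp t <= 0) -> forall t, 0 <= t -> p t <= C.
Proof.
  intros Hd Hr0 H0 Hneg t1 Ht1. apply Rnot_lt_le. intros Hp1.
  destruct (last_time_below p C t1) as [t0 [Ht0 [Hpt0 Hafter]]]; try assumption.
  { intros t Ht. apply (@ex_derive_continuous R_AbsRing R_NormedModule).
    exists (dp t). exact (Hd t Ht). }
  assert (Hr : right_continuous p t0).
  { destruct (Req_dec t0 0) as [-> | Hne]; [exact Hr0 |].
    apply (right_continuous_of_is_derive _ _ (dp t0)), Hd. lra. }
  assert (p t1 <= p t0).
  { apply (right_continuous_derive_nonpos_le p dp); try lra; try assumption.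
    - intros t Ht. apply Hd. lra.
    - intros t Ht. apply Hneg; [lra | apply Hafter; exact Ht]. }
  lra.
Qed.

Lemma nonneg_of_local_linear_lower_bound (x dx : R -> R) :
  (forall t, 0 < t -> is_derive x t (dx t)) -> right_continuous x 0 -> 0 <= x 0 ->
  (forall t0, 0 <= t0 -> 0 <= x t0 ->
     exists M, at_right t0 (fun u => x u < 0 -> M * x u <= dx u)) ->
  forall t, 0 <= t -> 0 <= x t.
Proof.
  intros Hd Hr0 H0 Hloc t1 Ht1. apply Rnot_lt_le. intros Hx1.
  destruct (last_time_below (fun t => - x t) 0 t1) as [t0 [Ht0 [Hxt0 Hafter]]]; try lra.
  { intros t Ht. apply (@ex_derive_continuous R_AbsRing R_NormedModule).
    exists (- dx t). apply (is_derive_opp x), Hd, Ht. }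
  (* Past the last time t0 with x t0 >= 0, x u * e^{-M u} would be nondecreasing. *)
  destruct (Hloc t0 ltac:(lra) ltac:(lra)) as [M [eps Heps]].
  set (e := fun u => - exp (- M * u)).
  assert (He : forall u, is_derive e u (M * exp (- M * u))).
  { intros u. unfold e. auto_derive; [exact I | ring]. }
  set (t2 := t0 + Rmin (eps / 2) (t1 - t0)).
  assert (Ht2 : t0 < t2 <= t1 /\ t2 < t0 + eps).
  { pose proof (Rmin_l (eps / 2) (t1 - t0)). pose proof (Rmin_r (eps / 2) (t1 - t0)).
    assert (0 < Rmin (eps / 2) (t1 - t0)) by (apply Rmin_glb_lt; pose proof (cond_pos eps); lra).
    unfold t2. lra. }
  assert (Hg : x t2 * e t2 <= x t0 * e t0).
  { apply (right_continuous_derive_nonpos_le (fun u => x u * e u)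
             (fun u => dx u * e u + x u * (M * exp (- M * u)))); try lra.
    - apply right_continuous_mult.
      + destruct (Req_dec t0 0) as [-> | Hne]; [exact Hr0 |].
        apply (right_continuous_of_is_derive _ _ (dx t0)), Hd. lra.
      + apply (right_continuous_of_is_derive _ _ _ (He t0)).
    - intros u Hu.
      apply (is_derive_mult x e); [apply Hd; lra | apply He | intros; apply Rmult_comm].
    - intros u Hu.
      assert (Hxu : x u < 0) by (pose proof (Hafter u ltac:(lra)); lra).
      assert (M * x u <= dx u).
      { apply Heps; [| lra | exact Hxu]. change (Rabs (u - t0) < eps). rewrite Rabs_right; lra. }
      unfold e. pose proof (exp_pos (- M * u)). nra. }
  unfold e in Hg. pose proof (exp_pos (- M * t2)). pose proof (exp_pos (- M * t0)).
  assert (x t2 < 0) by (pose proof (Hafter t2 ltac:(lra)); lra). nra.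
Qed.

Lemma is_lim_exp_decay_squeeze (g : R -> R) (A c : R) :
  0 < c -> (forall t, 0 <= t -> 0 <= g t <= A * exp (- c * t)) -> is_lim g p_infty 0.
Proof.
  intros Hc Hg.
  apply (is_lim_le_le_loc (fun _ => 0) (fun t => A * exp (- c * t))).
  - exists 0. intros t Ht. apply Hg. lra.
  - apply is_lim_const.
  - replace (Finite 0) with (Rbar_mult A 0) by (simpl; f_equal; ring).
    apply is_lim_scal_l.
    apply (is_lim_ext (fun t => exp (- c * t + 0))); [intros t; f_equal; ring |].
    apply (is_lim_comp_lin (fun y => exp y)); [| lra].
    replace (Rbar_plus (Rbar_mult (- c) p_infty) 0) with m_infty; [exact is_lim_exp_m |].
    simpl. destruct (Rle_dec 0 (- c)); [exfalso; lra | reflexivity].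
Qed.

Lemma sqrt_sum_sq_le_sum (a b : R) : 0 <= a -> 0 <= b -> sqrt (a ^ 2 + b ^ 2) <= a + b.
Proof.
  intros Ha Hb. rewrite <- (sqrt_pow2 (a + b)) by lra. apply sqrt_le_1_alt. nra.
Qed.

Lemma sum_le_twice_sqrt_sum_sq (a b : R) : a + b <= 2 * sqrt (a ^ 2 + b ^ 2).
Proof.
  destruct (sqrt_plus_sqr a b) as [Hmax _].
  pose proof (Rle_trans _ _ _ (Rmax_l _ _) Hmax). pose proof (Rle_trans _ _ _ (Rmax_r _ _) Hmax).
  pose proof (Rle_abs a). pose proof (Rle_abs b). lra.
Qed.

Lemma rhs_m_rhs_f (beta delta K d eta f m : R) :
  rhs_m beta delta K d eta f m = rhs_f beta delta K d eta m f.
Proof. unfold rhs_m, rhs_f, Lfun, Rdiv. ring. Qed.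

Lemma rhs_f_ge_linear_of_neg (beta delta K d eta a b B : R) :
  0 <= beta -> 0 <= delta -> 0 < K -> 0 <= eta ->
  Rabs a <= B -> Rabs b <= B -> - d < a < 0 ->
  beta / 2 * B * (1 + B / K) * a <= rhs_f beta delta K d eta a b.
Proof.
  intros Hbeta Hdelta HK Heta Ha Hb Had.
  apply Rabs_le_between in Ha. apply Rabs_le_between in Hb.
  assert (Hharv : 0 <= eta / (a + d)) by (apply Rdiv_le_0_compat; lra).
  assert (HbL : b * Lfun K a b <= B * (1 + B / K)).
  { unfold Lfun. replace (b * (1 - (a + b) / K)) with (b - b * a / K - b * b / K) by (field; lra).
    replace (B * (1 + B / K)) with (B + B * B / K) by (field; lra).
    assert (0 <= (B - b) * (B - a)) by (apply Rmult_le_pos; lra).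
    assert (0 <= (B + b) * (B + a)) by (apply Rmult_le_pos; lra).
    assert (- (b * a) <= B * B) by nra.
    assert (- (b * a) / K <= B * B / K)
      by (unfold Rdiv; apply Rmult_le_compat_r; [left; apply Rinv_0_lt_compat |]; lra).
    assert (0 <= b * b / K) by (apply Rdiv_le_0_compat; nra).
    unfold Rdiv in *. lra. }
  assert (Hfactor : rhs_f beta delta K d eta a b
                    = a * (beta / 2 * (b * Lfun K a b) - delta - eta / (a + d))).
  { unfold rhs_f. field. lra. }
  rewrite Hfactor.
  assert (beta / 2 * (b * Lfun K a b) - delta - eta / (a + d) <= beta / 2 * (B * (1 + B / K))).
  { assert (beta / 2 * (b * Lfun K a b) <= beta / 2 * (B * (1 + B / K)))
      by (apply Rmult_le_compat_l; lra).
    lra. }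
  replace (beta / 2 * B * (1 + B / K) * a) with (a * (beta / 2 * (B * (1 + B / K)))) by ring.
  apply Rmult_le_compat_neg_l; lra.
Qed.

Lemma rhs_sum_nonpos_above_capacity (beta delta K d1 d2 eta1 eta2 f m : R) :
  0 <= beta -> 0 <= delta -> 0 < K -> 0 < d1 -> 0 < d2 -> 0 <= eta1 -> 0 <= eta2 ->
  0 <= f -> 0 <= m -> K < f + m ->
  rhs_f beta delta K d1 eta1 f m + rhs_m beta delta K d2 eta2 f m <= 0.
Proof.
  intros Hbeta Hdelta HK Hd1 Hd2 He1 He2 Hf Hm Hover.
  assert (HL : Lfun K f m < 0).
  { unfold Lfun. apply Rlt_minus. apply (Rmult_lt_reg_r K); [exact HK |].
    unfold Rdiv. rewrite Rmult_assoc, Rinv_l by lra. lra. }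
  assert (0 <= f * m * beta) by (apply Rmult_le_pos; [apply Rmult_le_pos |]; lra).
  assert (0 <= eta1 * (f / (f + d1))) by (apply Rmult_le_pos; [| apply Rdiv_le_0_compat]; lra).
  assert (0 <= eta2 * (m / (m + d2))) by (apply Rmult_le_pos; [| apply Rdiv_le_0_compat]; lra).
  unfold rhs_f, rhs_m. nra.
Qed.

Lemma fm_logistic_le (K f m : R) :
  0 < K -> 0 <= f -> 0 <= m -> f * m * Lfun K f m <= K / 4 * f.
Proof.
  intros HK Hf Hm.
  assert (E : K / 4 * f - f * m * Lfun K f m = f * (K / 2 - m) ^ 2 / K + f * f * m / K)
    by (unfold Lfun; field; lra).
  assert (0 <= f * (K / 2 - m) ^ 2 / K)
    by (apply Rdiv_le_0_compat; [apply Rmult_le_pos; [| apply pow2_ge_0] |]; lra).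
  assert (0 <= f * f * m / K)
    by (apply Rdiv_le_0_compat; [apply Rmult_le_pos; [apply Rmult_le_pos |] |]; lra).
  lra.
Qed.

Lemma harvest_ge_linear (eta d K f : R) :
  0 <= eta -> 0 < d -> 0 <= f -> f <= K -> eta / (K + d) * f <= eta * (f / (f + d)).
Proof.
  intros He Hd Hf HfK.
  assert (E : eta * (f / (f + d)) - eta / (K + d) * f = eta * f * (K - f) / ((f + d) * (K + d)))
    by (field; lra).
  assert (0 <= eta * f * (K - f) / ((f + d) * (K + d))).
  { apply Rdiv_le_0_compat; [apply Rmult_le_pos; [apply Rmult_le_pos |] | nra]; lra. }
  lra.
Qed.

Definition decay_rate (beta delta K d1 d2 eta1 eta2 : R) : R :=
  let s := 2 * delta + eta1 / (K + d1) + eta2 / (K + d2) in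
  delta * (s - beta * K / 4) / s.

Lemma decay_rate_pos (beta delta K d1 d2 eta1 eta2 : R) :
  0 < delta -> 0 < K -> 0 < d1 -> 0 < d2 -> 0 <= eta1 -> 0 <= eta2 ->
  beta * K / 4 < 2 * delta + eta1 / (K + d1) + eta2 / (K + d2) ->
  0 < decay_rate beta delta K d1 d2 eta1 eta2.
Proof.
  intros Hdelta HK Hd1 Hd2 He1 He2 Hs. unfold decay_rate.
  assert (0 <= eta1 / (K + d1)) by (apply Rdiv_le_0_compat; lra).
  assert (0 <= eta2 / (K + d2)) by (apply Rdiv_le_0_compat; lra).
  apply Rdiv_lt_0_compat; [apply Rmult_lt_0_compat |]; lra.
Qed.

Lemma rhs_sum_le_decay (beta delta K d1 d2 eta1 eta2 f m : R) :
  0 <= beta -> 0 < delta -> 0 < K -> 0 < d1 -> 0 < d2 -> 0 <= eta1 -> 0 <= eta2 ->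
  beta * K / 4 <= 2 * delta + eta1 / (K + d1) + eta2 / (K + d2) ->
  0 <= f -> 0 <= m -> f + m <= K ->
  rhs_f beta delta K d1 eta1 f m + rhs_m beta delta K d2 eta2 f m <=
  - decay_rate beta delta K d1 d2 eta1 eta2 * (f + m).
Proof.
  intros Hbeta Hdelta HK Hd1 Hd2 He1 He2 Hs Hf Hm HfmK.
  pose proof (harvest_ge_linear eta1 d1 K f He1 Hd1 Hf ltac:(lra)) as Hh1.
  pose proof (harvest_ge_linear eta2 d2 K m He2 Hd2 Hm ltac:(lra)) as Hh2.
  unfold decay_rate. cbv zeta.
  set (p := delta + eta1 / (K + d1)). set (q := delta + eta2 / (K + d2)).
  set (B := beta * K / 4).
  set (X := beta * (f * m * Lfun K f m)).
  assert (Hp : delta <= p) by (unfold p; pose proof (Rdiv_le_0_compat eta1 (K + d1)); lra).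
  assert (Hq : delta <= q) by (unfold q; pose proof (Rdiv_le_0_compat eta2 (K + d2)); lra).
  replace (2 * delta + eta1 / (K + d1) + eta2 / (K + d2)) with (p + q) in * by (unfold p, q; ring).
  fold B in Hs.
  assert (Hsum : rhs_f beta delta K d1 eta1 f m + rhs_m beta delta K d2 eta2 f m
                 <= X - p * f - q * m).
  { replace (rhs_f beta delta K d1 eta1 f m + rhs_m beta delta K d2 eta2 f m)
      with (X - delta * f - delta * m - eta1 * (f / (f + d1)) - eta2 * (m / (m + d2)))
      by (unfold rhs_f, rhs_m, X; field; lra).
    unfold p, q. lra. }
  assert (HXf : X <= B * f).
  { unfold X, B. pose proof (fm_logistic_le K f m HK Hf Hm).
    replace (beta * K / 4 * f) with (beta * (K / 4 * f)) by field. apply Rmult_le_compat_l; lra. }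
  assert (HXm : X <= B * m).
  { unfold X, B. pose proof (fm_logistic_le K m f HK Hm Hf).
    replace (f * m * Lfun K f m) with (m * f * Lfun K m f) by (unfold Lfun, Rdiv; ring).
    replace (beta * K / 4 * m) with (beta * (K / 4 * m)) by field. apply Rmult_le_compat_l; lra. }
  assert (Hweighted : (p + q) * (X - p * f - q * m) <= delta * (B - (p + q)) * (f + m)).
  { assert (p * X <= p * (B * f)) by (apply Rmult_le_compat_l; lra).
    assert (q * X <= q * (B * m)) by (apply Rmult_le_compat_l; lra).
    assert ((p - delta) * (B - (p + q)) * f <= 0)
      by (apply Rmult_le_0_r; [apply Rmult_le_0_l |]; lra).
    assert ((q - delta) * (B - (p + q)) * m <= 0)
      by (apply Rmult_le_0_r; [apply Rmult_le_0_l |]; lra).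
    nra. }
  assert (X - p * f - q * m <= - (delta * (p + q - B) / (p + q)) * (f + m)).
  { apply (Rmult_le_reg_l (p + q)); [lra |].
    replace ((p + q) * (- (delta * (p + q - B) / (p + q)) * (f + m)))
      with (delta * (B - (p + q)) * (f + m)) by (field; lra).
    exact Hweighted. }
  lra.
Qed.

Lemma solution_right_continuous (beta delta K d1 d2 eta1 eta2 : R) (f m : R -> R) :
  is_solution beta delta K d1 d2 eta1 eta2 f m ->
  forall t, 0 <= t -> right_continuous f t /\ right_continuous m t.
Proof.
  intros [Hf0 [Hm0 Hder]] t Ht.
  destruct (Req_dec t 0) as [-> | Hne]; [split; assumption |].
  destruct (Hder t ltac:(lra)) as [Hf Hm].
  split; [exact (right_continuous_of_is_derive _ _ _ Hf) |
          exact (right_continuous_of_is_derive _ _ _ Hm)].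
Qed.

Lemma harvested_component_nonneg (beta delta K d eta : R) (x y : R -> R) :
  0 <= beta -> 0 <= delta -> 0 < K -> 0 < d -> 0 <= eta ->
  (forall t, 0 <= t -> right_continuous x t) -> (forall t, 0 <= t -> right_continuous y t) ->
  (forall t, 0 < t -> is_derive x t (rhs_f beta delta K d eta (x t) (y t))) ->
  0 <= x 0 -> forall t, 0 <= t -> 0 <= x t.
Proof.
  intros Hbeta Hdelta HK Hd Heta Hrx Hry Hder Hx0.
  apply (nonneg_of_local_linear_lower_bound x (fun t => rhs_f beta delta K d eta (x t) (y t)));
    [exact Hder | apply Hrx; lra | exact Hx0 |].
  intros t0 Ht0 Hxt0.
  (* Near t0, x + d stays positive, so the per-capita rate of x is bounded above. *)
  set (B := Rabs (x t0) + Rabs (y t0) + d + 1).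
  exists (beta / 2 * B * (1 + B / K)).
  apply (filter_imp (fun u => Rabs (x u - x t0) < d /\ Rabs (y u - y t0) < 1)).
  - intros u [Hxu Hyu] Hneg.
    pose proof (Rabs_triang_inv (x u) (x t0)). pose proof (Rabs_triang_inv (y u) (y t0)).
    pose proof (Rabs_pos (x t0)). pose proof (Rabs_pos (y t0)).
    apply rhs_f_ge_linear_of_neg; try assumption; unfold B; try lra.
    apply Rabs_def2 in Hxu. lra.
  - apply filter_and; apply right_continuous_near; [apply Hrx | | apply Hry |]; lra.
Qed.

Section Trajectories.

Variables beta delta K d1 d2 eta1 eta2 : R.
Hypotheses (Hbeta : 0 <= beta) (Hdelta : 0 < delta) (HK : 0 < K) (Hd1 : 0 < d1) (Hd2 : 0 < d2)
  (He1 : 0 <= eta1) (He2 : 0 <= eta2)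
  (Hthreshold : beta * K / 4 < 2 * delta + eta1 / (K + d1) + eta2 / (K + d2)).

Lemma solution_decay (f m : R -> R) :
  is_solution beta delta K d1 d2 eta1 eta2 f m -> in_region K (f 0) (m 0) ->
  forall t, 0 <= t -> 0 <= f t /\ 0 <= m t /\
    f t + m t <= (f 0 + m 0) * exp (- decay_rate beta delta K d1 d2 eta1 eta2 * t).
Proof.
  intros Hsol [Hf0 [Hm0 HK0]].
  pose proof (solution_right_continuous _ _ _ _ _ _ _ _ _ Hsol) as Hrc.
  destruct Hsol as [_ [_ Hder]].
  set (c := decay_rate beta delta K d1 d2 eta1 eta2).
  set (dV := fun t => rhs_f beta delta K d1 eta1 (f t) (m t)
                      + rhs_m beta delta K d2 eta2 (f t) (m t)).
  assert (Hf : forall t, 0 <= t -> 0 <= f t).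
  { apply (harvested_component_nonneg beta delta K d1 eta1 f m); try lra; try assumption.
    - intros t Ht. apply Hrc, Ht.
    - intros t Ht. apply Hrc, Ht.
    - intros t Ht. apply Hder, Ht. }
  assert (Hm : forall t, 0 <= t -> 0 <= m t).
  { apply (harvested_component_nonneg beta delta K d2 eta2 m f); try lra; try assumption.
    - intros t Ht. apply Hrc, Ht.
    - intros t Ht. apply Hrc, Ht.
    - intros t Ht. rewrite <- rhs_m_rhs_f. apply Hder, Ht. }
  assert (HdV : forall t, 0 < t -> is_derive (fun u => f u + m u) t (dV t)).
  { intros t Ht. apply (is_derive_plus f m); apply Hder, Ht. }
  assert (HrV : right_continuous (fun u => f u + m u) 0)
    by (apply right_continuous_plus; apply Hrc; lra).
  assert (Hcap : forall t, 0 <= t -> f t + m t <= K).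
  { apply (barrier_le _ dV); try assumption.
    intros t Ht Hover. apply rhs_sum_nonpos_above_capacity; try apply Hf; try apply Hm; lra. }
  assert (Hlyap : forall t, 0 <= t -> (f t + m t) * exp (c * t) <= (f 0 + m 0) * exp (c * 0)).
  { apply (barrier_le _ (fun t => dV t * exp (c * t) + (f t + m t) * (c * exp (c * t)))).
    - intros t Ht. apply (is_derive_mult (fun u => f u + m u) (fun u => exp (c * u))).
      + exact (HdV t Ht).
      + auto_derive; [exact I | ring].
      + intros; apply Rmult_comm.
    - apply right_continuous_mult; [exact HrV |].
      apply (right_continuous_of_is_derive _ _ (c * exp (c * 0))). auto_derive; [exact I | ring].
    - lra.
    - intros t Ht _.
      assert (dV t <= - c * (f t + m t))
        by (apply rhs_sum_le_decay; try apply Hf; try apply Hm; try apply Hcap; lra).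
      pose proof (exp_pos (c * t)). nra. }
  intros t Ht. split; [apply Hf, Ht | split; [apply Hm, Ht |]].
  pose proof (Hlyap t Ht) as Hlt. rewrite Rmult_0_r, exp_0, Rmult_1_r in Hlt.
  apply (Rmult_le_reg_r (exp (c * t))); [apply exp_pos |].
  rewrite Rmult_assoc, <- exp_plus. replace (- c * t + c * t) with 0 by ring.
  rewrite exp_0, Rmult_1_r. exact Hlt.
Qed.

Lemma solution_norm_le (f m : R -> R) :
  is_solution beta delta K d1 d2 eta1 eta2 f m -> in_region K (f 0) (m 0) ->
  forall t, 0 <= t -> sqrt (f t ^ 2 + m t ^ 2) <= 2 * sqrt (f 0 ^ 2 + m 0 ^ 2).
Proof.
  intros Hsol Hreg t Ht.
  destruct (solution_decay f m Hsol Hreg t Ht) as [Hf [Hm HV]].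
  destruct Hreg as [Hf0 [Hm0 _]].
  pose proof (decay_rate_pos beta delta K d1 d2 eta1 eta2 Hdelta HK Hd1 Hd2 He1 He2 Hthreshold).
  set (c := decay_rate beta delta K d1 d2 eta1 eta2) in *.
  assert (exp (- c * t) <= 1).
  { destruct (Req_dec t 0) as [-> | Ht0]; [rewrite Rmult_0_r, exp_0; lra |].
    rewrite <- exp_0. left. apply exp_increasing. nra. }
  assert ((f 0 + m 0) * exp (- c * t) <= f 0 + m 0)
    by (rewrite <- (Rmult_1_r (f 0 + m 0)) at 2; apply Rmult_le_compat_l; lra).
  pose proof (sqrt_sum_sq_le_sum _ _ Hf Hm). pose proof (sum_le_twice_sqrt_sum_sq (f 0) (m 0)).
  lra.
Qed.

Lemma solution_tendsto_origin (f m : R -> R) :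
  is_solution beta delta K d1 d2 eta1 eta2 f m -> in_region K (f 0) (m 0) ->
  is_lim f p_infty 0 /\ is_lim m p_infty 0.
Proof.
  intros Hsol Hreg.
  pose proof (solution_decay f m Hsol Hreg) as Hb.
  pose proof (decay_rate_pos beta delta K d1 d2 eta1 eta2 Hdelta HK Hd1 Hd2 He1 He2 Hthreshold)
    as Hc.
  set (c := decay_rate beta delta K d1 d2 eta1 eta2) in *.
  destruct Hreg as [_ [_ HK0]].
  assert (Hexp : forall t, (f 0 + m 0) * exp (- c * t) <= K * exp (- c * t))
    by (intros t; pose proof (exp_pos (- c * t)); nra).
  split; apply (is_lim_exp_decay_squeeze _ K c Hc); intros t Ht;
    destruct (Hb t Ht) as [Hf [Hm HV]]; pose proof (Hexp t); lra.
Qed.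

End Trajectories.

Theorem mainTheorem16 (beta delta K d1 d2 eta1 eta2 : R) :
  0 < beta < 1 -> 0 < delta < 1 -> 0 < K -> 0 < d1 -> 0 < d2 ->
  0 <= eta1 -> 0 <= eta2 ->
  beta * K < 2 * delta + eta1 / (K + d1) + eta2 / (K + d2) ->
  GAS_origin beta delta K d1 d2 eta1 eta2.
Proof.
  intros Hbeta Hdelta HK Hd1 Hd2 He1 He2 Hthr.
  assert (Hthr4 : beta * K / 4 < 2 * delta + eta1 / (K + d1) + eta2 / (K + d2))
    by (pose proof (Rmult_lt_0_compat beta K ltac:(lra) HK); lra).
  split.
  - intros eps Heps. exists (eps / 2). split; [lra |].
    intros f m Hsol Hreg Hnear t Ht.
    pose proof (solution_norm_le beta delta K d1 d2 eta1 eta2 ltac:(lra) ltac:(lra)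
                  HK Hd1 Hd2 He1 He2 Hthr4 f m Hsol Hreg t Ht).
    lra.
  - intros f m.
    exact (solution_tendsto_origin beta delta K d1 d2 eta1 eta2 ltac:(lra) ltac:(lra)
             HK Hd1 Hd2 He1 He2 Hthr4 f m).
Qed.
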